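(* Let $G=(V,E)$ be a locally finite connected simple undirected graph with a distinguished root vertex $e\in V$, and let $k\ge 1$ be an integer such that $\sigma:=|V_e^{[k]}|\ge 1$, where $V_e^{[k]}=\{x\in V:\partial_G(x,e)=k\}$ is the set of neighbours of $e$ in the distance $k$-graph $G^{[k]}$. For $N\ge 1$ let $G^{\star N}$ be the $N$-fold star power of $G$ (rooted at $e$), let $G^{[\star N,k]}$ be the distance $k$-graph of $G^{\star N}$, and let $A^{[\star N,k]}$ be its adjacency matrix. Then, as $N\to\infty$, the distribution of $(N\sigma)^{-1/2}A^{[\star N,k]}$ with respect to the vacuum state at $e$ converges weakly to the centered Bernoulli distribution $\frac12\delta_{-1}+\frac12\delta_{1}$.
   Context: All graphs are simple (no loops) and undirected; $\partial_H(x,y)$ denotes the graph distance in a graph $H$. For a graph $H=(W,F)$ and $k\ge1$, the distance $k$-graph $H^{[k]}$ is the graph on $W$ whose edges are the pairs $(x,y)$ with $\partial_H(x,y)=k$. For rooted graphs $(G_1,o_1)$, $(G_2,o_2)$ the star product $G_1\star G_2$ has vertex set $V_1\times V_2$, with $(v_1,w_1)\sim(v_2,w_2)$ iff either $v_1=v_2=o_1$ and $w_1\sim w_2$ in $G_2$, or $v_1\sim v_2$ in $G_1$ and $w_1=w_2=o_2$; it is rooted at $(o_1,o_2)$. Equivalently, (the connected component of the root of) the $N$-fold star power $G^{\star N}=G\star\cdots\star G$ is the graph obtained by taking $N$ disjoint copies of $G$ and identifying their roots into a single vertex, again denoted $e$. The distribution of a (symmetric) adjacency matrix $A$ with respect to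 the vacuum state at the vertex $e$ is the probability measure $\mu$ on $\mathbb{R}$ with $\int x^m\,\mu(dx)=(A^m)_{ee}$ for all $m\ge0$, i.e. the $m$-th moment is the number of walks of length $m$ starting and ending at $e$. *)

From HB Require Import structures.
From mathcomp Require Import all_boot all_order all_algebra.
From mathcomp Require Import all_classical all_reals all_analysis.
Set Implicit Arguments. Unset Strict Implicit. Unset Printing Implicit Defensive.
Import Order.TTheory GRing.Theory Num.Theory.
Local Open Scope classical_set_scope.
Local Open Scope ring_scope.

Definition is_dist (T : eqType) (r : rel T) (x y : T) (n : nat) : Prop :=
  (exists p : seq T, [/\ path r x p, last x p = y & size p = n]) /\
  (forall p : seq T, path r x p -> last x p = y -> (n <= size p)%N).

Definition distk (T : eqType) (r : rel T) (k : nat) (x y : T) : Prop :=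
  is_dist r x y k.

(* Vertex set of the N-fold star power of (V, e): the common root [None],
   and for each copy i < N the non-root vertices [Some (i, x)], x != e. *)
Definition starV (V : eqType) (e : V) (N : nat) : Type :=
  option ('I_N * {x : V | x != e}).

Definition star_adj (V : choiceType) (adj : rel V) (e : V) (N : nat)
  : rel (starV e N) :=
  fun u v =>
    match u, v with
    | None, None => false
    | None, Some (_, y) => adj e (val y)
    | Some (_, x), None => adj (val x) e
    | Some (i, x), Some (j, y) => (i == j) && adj (val x) (val y)
    end.

(* Number of walks of length m from x to o in the graph with edge relation r:
   the entry (A^m)_{x o} of its adjacency matrix (r locally finite). *)
Fixpoint nwalks (R : realType) (T : choiceType) (r : T -> T -> Prop) (o : T)
  (m : nat) (x : T) {struct m} : R :=
  match m with
  | 0%N => (x == o)%:R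
  | m'.+1 => \sum_(y \in [set y | r x y]) nwalks R r o m' y
  end.

(* The theorem follows from the method of moments with a single quartic test
   polynomial.  Closed walks at the root of the distance k-graph of G^{*N} are
   counted copy by copy: a root-to-root walk of length 2 visits one of the
   N sigma vertices at distance k from the root, and a vertex of copy j at
   distance k from the root is at distance k only from the root and from
   vertices of copy j, since a walk leaving a copy passes through the root.
   This gives m1 = 0, m2 = 1 and m4 <= 1 + B / N for the normalised moments,
   where B sums, over the k-sphere of G, the number of endpoints of k-walks.
   A bounded continuous f differs from its affine interpolant c0 + c1 x at -1
   and 1 by at most eps + K (x^2 - 1)^2, and integrating this envelope against
   mu N yields |int f d(mu N) - c0| <= eps + K (m4 - 1). *)

From HB Require Import structures.
From mathcomp Require Import all_boot all_order all_algebra.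
From mathcomp Require Import all_classical all_reals all_analysis.
From mathcomp Require Import lra ring.
Import Order.TTheory GRing.Theory Num.Theory.
Import numFieldNormedType.Exports.
Local Open Scope classical_set_scope.
Local Open Scope ring_scope.

Set Implicit Arguments. Unset Strict Implicit. Unset Printing Implicit Defensive.

Section FiniteSums.
Variables (R : numDomainType) (T : choiceType).

Lemma ler_fsum (A : set T) (F G : T -> R) :
  finite_set A -> (forall x, A x -> F x <= G x) ->
  \sum_(x \in A) F x <= \sum_(x \in A) G x.
Proof.
move=> A_fin FG; rewrite !fsbig_finite // big_seq [leRHS]big_seq.
by apply: ler_sum => x; rewrite in_fset_set // inE => /FG.
Qed.

Lemma ler_fsum_subset (A B : set T) (F : T -> R) :
  finite_set B -> A `<=` B -> (forall x, B x -> 0 <= F x) ->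
  \sum_(x \in A) F x <= \sum_(x \in B) F x.
Proof.
move=> B_fin AB F_ge0; rewrite [leRHS](fsbigID A) // (setIidr AB) lerDl.
by apply: fsumr_ge0 => x [/F_ge0].
Qed.

Lemma fsum_le_mul_card (A B : set T) (F : T -> R) (c : R) :
  finite_set A -> finite_set B -> 0 <= c ->
  (forall x, B x -> ~ A x -> F x = 0) -> (forall x, B x -> A x -> F x <= c) ->
  \sum_(x \in B) F x <= c * \sum_(x \in A) (1 : R).
Proof.
move=> A_fin B_fin c_ge0 F_out F_in.
rewrite (fsbigID A) //= [X in _ + X]fsbig1 ?addr0; last by move=> x [Bx /F_out->].
rewrite mulr_fsumr; under [leRHS]eq_fsbigr do rewrite mulr1.
apply: (@le_trans _ _ (\sum_(x \in B `&` A) c)).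
  by apply: ler_fsum => [|x [Bx Ax]]; [exact: finite_setIl | exact: F_in].
exact: ler_fsum_subset.
Qed.

Lemma fsum_ord_cst N (c : R) : \sum_(i \in [set: 'I_N]) c = N%:R * c.
Proof.
rewrite (fsbigE (enum 'I_N)) ?enum_uniq // => [|i _]; last by rewrite mem_enum.
rewrite (eq_bigl predT) => [|i]; last exact: asboolT.
by rewrite big_const_seq count_predT size_enum_ord iter_addr_0 mulr_natl.
Qed.

End FiniteSums.
Section Distance.
Variables (T : eqType) (r : rel T).

Definition walk_ends (x : T) (n : nat) : set T :=
  [set y | exists p, [/\ path r x p, last x p = y & size p = n]].

Lemma distk_walk_ends k x y : distk r k x y -> walk_ends x k y.
Proof. by case. Qed.

Lemma distk_neq k x y : (0 < k)%N -> distk r k x y -> x != y.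
Proof.
by move=> k_gt0 [_ min_k]; apply/eqP => xy; have := min_k [::] isT xy; rewrite leqNgt k_gt0.
Qed.

Lemma rev_walk x p : symmetric r -> path r x p ->
  [/\ path r (last x p) (rev (belast x p)),
      last (last x p) (rev (belast x p)) = x & size (rev (belast x p)) = size p].
Proof.
move=> r_sym rp; split.
- by rewrite rev_path; apply: sub_path rp => a b; rewrite r_sym.
- by case: p {rp} => //= a q; rewrite rev_cons last_rcons.
- by rewrite size_rev size_belast.
Qed.

Lemma is_dist_sym x y n : symmetric r -> is_dist r x y n -> is_dist r y x n.
Proof.
move=> r_sym [[p [rp <- <-]] min_n]; split.
- by have [? ? ?] := rev_walk r_sym rp; exists (rev (belast x p)).
- move=> q rq qx; have := rev_walk r_sym rq; rewrite qx => -[q_rev q_last <-].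
  exact: min_n q_rev q_last.
Qed.

End Distance.

Lemma walk_ends_finite (T : choiceType) (r : rel T) x n :
  (forall y, finite_set [set z | r y z]) -> finite_set (walk_ends r x n).
Proof.
move=> r_fin; elim: n => [|n IHn].
  apply: sub_finite_set (finite_set1 x) => y [p [_ <-]].
  by case: p.
apply: sub_finite_set (bigcup_finite IHn (fun y _ => r_fin y)) => z [p [rp <- p_size]].
case/lastP: p rp p_size => [|q c] //.
rewrite rcons_path last_rcons size_rcons => /andP[rq r_last] [q_size].
by exists (last x q) => //; exists q.
Qed.

Section Walks.
Variables (R : realType) (T : choiceType) (r : T -> T -> Prop) (o : T).

Lemma nwalksS m x : nwalks R r o m.+1 x = \sum_(y \in [set y | r x y]) nwalks R r o m y.
Proof. by []. Qed.

Lemma nwalks_ge0 m x : 0 <= nwalks R r o m x.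
Proof. by elim: m x => [|m IHm] x /=; [exact: ler0n | exact: fsumr_ge0]. Qed.

Lemma nwalks1E x : finite_set [set y | r x y] -> nwalks R r o 1 x = `[< r x o >]%:R.
Proof.
move=> r_fin /=; case: asboolP => [xo | xNo].
- rewrite (fsbigD1 o) //= eqxx fsbig1 ?addr0 // => y [_ /eqP yNo].
  by rewrite (negbTE yNo).
- by apply: fsbig1 => y xy; case: eqP => // yo; rewrite -yo in xNo.
Qed.

Lemma nwalks1_le1 x : finite_set [set y | r x y] -> nwalks R r o 1 x <= 1.
Proof. by move=> r_fin; rewrite nwalks1E //; case: asboolP. Qed.

End Walks.

Section StarPower.
Variables (V : choiceType) (adj : rel V) (e : V) (N : nat).
Hypotheses (adj_sym : symmetric adj) (adj_irr : irreflexive adj).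
Hypothesis adj_fin : forall x, finite_set [set y | adj x y].

Local Notation star := (@star_adj V adj e N).

Definition sproj (v : starV e N) : V := if v is Some (_, x) then val x else e.

Definition slift (i : 'I_N) (x : V) : starV e N := omap (pair i) (insub x).

Lemma sproj_lift i x : sproj (slift i x) = x.
Proof. by rewrite /slift; case: insubP => [w _ <-|] //=; rewrite negbK => /eqP. Qed.

Lemma slift_inj i : injective (slift i).
Proof. by move=> x y /(congr1 sproj); rewrite !sproj_lift. Qed.

Lemma slift_val i w : slift i (val w) = Some (i, w).
Proof. by rewrite /slift valK. Qed.

Lemma slift_root i : slift i e = None.
Proof. by rewrite /slift insubF // eqxx. Qed.

Lemma star_adj_lift i x y : star (slift i x) (slift i y) = adj x y.
Proof.
rewrite /slift; case: insubP => [w _ <-|]; case: insubP => [w' _ <-|] //=.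
- by rewrite eqxx.
- by rewrite negbK => /eqP ->.
- by rewrite negbK => /eqP ->.
- by rewrite !negbK => /eqP -> /eqP ->; rewrite adj_irr.
Qed.

Lemma star_adj_proj u v : star u v -> adj (sproj u) (sproj v).
Proof. by case: u => [[i x]|]; case: v => [[j y]|] //= /andP[]. Qed.

Lemma star_adj_sym : symmetric star.
Proof. by move=> [[i x]|] [[j y]|] //=; rewrite adj_sym // eq_sym. Qed.

Lemma path_proj u p : path star u p -> path adj (sproj u) (map sproj p).
Proof.
elim: p u => //= v p IHp u /andP[uv vp].
by rewrite (star_adj_proj uv) IHp.
Qed.

Lemma path_lift i x p :
  path adj x p -> path star (slift i x) (map (slift i) p).
Proof.
elim: p x => //= y p IHp x /andP[xy yp].
by rewrite star_adj_lift xy IHp.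
Qed.

Lemma walk_ends_proj v n w : walk_ends star v n w -> walk_ends adj (sproj v) n (sproj w).
Proof.
move=> [p [sp <- <-]]; exists (map sproj p).
by rewrite path_proj // last_map size_map.
Qed.

Lemma is_dist_lift i x y n :
  is_dist star (slift i x) (slift i y) n <-> is_dist adj x y n.
Proof.
split=> -[[p [wp p_last p_size]] min_n]; split.
- have := walk_ends_proj (ex_intro _ p (And3 wp p_last p_size)).
  by rewrite !sproj_lift.
- move=> q aq q_last; rewrite -(size_map (slift i)); apply: min_n.
  + exact: path_lift.
  + by rewrite last_map q_last.
- by exists (map (slift i) p); rewrite path_lift // last_map p_last size_map.
- move=> q sq q_last; rewrite -(size_map sproj); apply: min_n.
  + by have := path_proj sq; rewrite sproj_lift.
  + by rewrite -[x](sproj_lift i) last_map q_last sproj_lift.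
Qed.

Lemma distk_lift_root k i x : distk star k (slift i x) None <-> distk adj k x e.
Proof. by rewrite -(slift_root i); apply: is_dist_lift. Qed.

Lemma distk_root_lift k i x : distk star k None (slift i x) <-> distk adj k e x.
Proof. by rewrite -(slift_root i); apply: is_dist_lift. Qed.

(* The walk has to pass through the root, and its part after the root is strictly shorter. *)
Lemma walk_across_copies i j x w p : i != j ->
  path star (Some (i, x)) p -> last (Some (i, x)) p = Some (j, w) ->
  exists q, [/\ path star None q, last None q = Some (j, w) & (size q < size p)%N].
Proof.
move=> ij sp p_last.
have root_p : None \in p.
  elim: p x sp p_last => [|[[i' y]|] p IHp] x /=; last by rewrite inE eqxx.
    by move=> _ [ji _]; rewrite ji eqxx in ij.
  move=> /andP[/andP[/eqP <- _] sp] p_last.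
  by rewrite inE (IHp y sp p_last) orbT.
case/splitPr: root_p sp p_last => p1 p2.
rewrite cat_path last_cat /= => /andP[_ /andP[_ sp2]] p2_last.
by exists p2; rewrite sp2 p2_last size_cat /= addnS ltnS leq_addl.
Qed.

Variable k : nat.
Hypothesis k_gt0 : (0 < k)%N.

Local Notation sphere := [set x | distk adj k e x].

Lemma star_distk_same_copy i j x w :
  distk star k (Some (i, x)) (Some (j, w)) -> distk adj k e (val w) -> i = j.
Proof.
move=> [[p [sp p_last <-]] _] [_ min_k]; apply/eqP; apply: contraT => ij.
have [q [sq q_last qp]] := walk_across_copies ij sp p_last.
have := min_k _ (path_proj sq); rewrite -[e]/(sproj None) last_map q_last.
by move=> /(_ erefl); rewrite size_map leqNgt qp.
Qed.

Lemma sphere_finite : finite_set sphere.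
Proof.
by apply: sub_finite_set (walk_ends_finite e k adj_fin) => x /distk_walk_ends.
Qed.

Lemma star_distk_finite v : finite_set [set w | distk star k v w].
Proof.
pose cover := (fun p : 'I_N * V => slift p.1 p.2) @` (setT `*` walk_ends adj (sproj v) k).
have cover_fin : finite_set ([set None] `|` cover).
  rewrite finite_setU; split; first exact: finite_set1.
  apply: finite_image; apply: finite_setX; first exact: finite_finset.
  exact: walk_ends_finite.
apply: sub_finite_set cover_fin => -[[i w]|] /= vw; [right | by left].
exists (i, val w); last by rewrite /= slift_val.
by split=> //=; have := walk_ends_proj (distk_walk_ends vw).
Qed.

Lemma star_root_sphere :
  [set w | distk star k None w] =
  (fun p : 'I_N * V => slift p.1 p.2) @` (setT `*` sphere).
Proof.
apply/seteqP; split.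
- move=> [[i w]|] /= root_w; last by have := distk_neq k_gt0 root_w; rewrite eqxx.
  exists (i, val w); last by rewrite /= slift_val.
  by split=> //=; apply/(distk_root_lift k i); rewrite slift_val.
- by move=> w [[i u] [_ /= eu] <-] /=; apply/distk_root_lift.
Qed.

Lemma fsum_star_root_sphere (R : numDomainType) (F : starV e N -> R) :
  \sum_(w \in [set w | distk star k None w]) F w =
  \sum_(i \in [set: 'I_N]) \sum_(u \in sphere) F (slift i u).
Proof.
rewrite star_root_sphere fsbig_image; last first.
  move=> [i u] [i' u'] /set_mem [_ /= eu] /set_mem [_ /= eu'] /= lift_eq.
  have uu' : u = u' by have := congr1 sproj lift_eq; rewrite !sproj_lift.
  have u'_ne : u' != e by rewrite eq_sym (distk_neq k_gt0 eu').
  have u'_lift := slift_val _ (exist (fun x => x != e) u' u'_ne).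
  by move: lift_eq; rewrite uu' !u'_lift => -[->].
by rewrite pair_fsbig //; [exact: finite_finset | exact: sphere_finite].
Qed.

End StarPower.

Section StarWalks.
Variables (R : realType) (V : choiceType) (adj : rel V) (e : V) (N k : nat).
Hypotheses (adj_sym : symmetric adj) (adj_irr : irreflexive adj).
Hypothesis adj_fin : forall x, finite_set [set y | adj x y].
Hypothesis k_gt0 : (0 < k)%N.

Local Notation star := (@star_adj V adj e N).
Local Notation W := (nwalks R (distk star k) None).
Local Notation sphere := [set x | distk adj k e x].
Local Notation sigma := (\sum_(x \in sphere) (1 : R)).
Local Notation B := (\sum_(u \in sphere) \sum_(x \in walk_ends adj u k) (1 : R)).

Lemma nwalks_star_root1 : W 1 None = 0.
Proof.
rewrite nwalks1E; last exact: star_distk_finite.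
by case: asboolP => // /(distk_neq k_gt0); rewrite eqxx.
Qed.

Lemma nwalks_star_root2 : W 2 None = N%:R * sigma.
Proof.
rewrite nwalksS fsum_star_root_sphere // -fsum_ord_cst.
apply: eq_fsbigr => i _; apply: eq_fsbigr => u /set_mem eu.
rewrite nwalks1E ?asboolT //; last exact: star_distk_finite.
by apply/distk_lift_root => //; apply: is_dist_sym.
Qed.

Lemma star_distk_root_same_copy i j x w :
  distk star k (Some (i, x)) (Some (j, w)) -> distk star k (Some (j, w)) None -> i = j.
Proof.
move=> xw wN; apply: star_distk_same_copy xw _ => //.
by apply: is_dist_sym => //; apply/(distk_lift_root e adj_irr k j); rewrite slift_val.
Qed.

Lemma nwalks_star2_le j x : W 2 (Some (j, x)) <= sigma.
Proof.
rewrite nwalksS -[leRHS]mul1r -(@fsbig_image _ _ _ _ _ _ (slift e j) (fun=> 1));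
  last by move=> a b _ _; apply: slift_inj.
apply: fsum_le_mul_card => //.
- exact/finite_image/sphere_finite.
- exact: star_distk_finite.
- move=> w xw w_out; rewrite nwalks1E; last exact: star_distk_finite.
  case: asboolP => // wN; exfalso; case: w xw w_out wN => [[i w]|] xw w_out wN.
    have ji := star_distk_root_same_copy xw wN; apply: w_out.
    exists (val w); last by rewrite slift_val ji.
    by apply: is_dist_sym => //; apply/(distk_lift_root e adj_irr k i); rewrite slift_val.
  by have := distk_neq k_gt0 wN; rewrite eqxx.
- by move=> w xw _; apply/nwalks1_le1/star_distk_finite.
Qed.

Lemma star_distk_lift_nbhd j u : distk adj k e u ->
  [set w | distk star k (slift e j u) w] `\ None `<=` slift e j @` walk_ends adj u k.
Proof.
move=> eu [[i x]|] [/= ux xNroot]; last by case: xNroot.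
exists (val x); first by have := walk_ends_proj (distk_walk_ends ux); rewrite sproj_lift.
have uN : distk star k (slift e j u) None.
  by apply/distk_lift_root => //; apply: is_dist_sym.
have u_ne : u != e by rewrite eq_sym (distk_neq k_gt0 eu).
have xu := is_dist_sym (star_adj_sym adj_sym) ux.
rewrite (slift_val j (exist (fun x => x != e) u u_ne)) in uN xu.
by rewrite slift_val (star_distk_root_same_copy xu uN).
Qed.

Lemma nwalks_star3_le j u : distk adj k e u -> W 3 (slift e j u) <= N%:R * sigma + sigma * B.
Proof.
move=> eu; have uN : distk star k (slift e j u) None.
  by apply/distk_lift_root => //; apply: is_dist_sym.
rewrite nwalksS (fsbigD1 None) //; last exact: star_distk_finite.
rewrite nwalks_star_root2 lerD2l.
apply: (@le_trans _ _ (sigma * \sum_(x \in walk_ends adj u k) (1 : R))); last first.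
  apply: ler_wpM2l; first exact: fsumr_ge0.
  rewrite -[leLHS](@fsbig_set1 _ 0 +%R _ u (fun u => \sum_(x \in walk_ends adj u k) (1 : R))).
  apply: ler_fsum_subset => [|y /= -> //|y _]; [exact: sphere_finite | exact: fsumr_ge0].
rewrite -(@fsbig_image _ _ _ _ _ (walk_ends adj u k) (slift e j) (fun=> 1));
  last by move=> a b _ _; apply: slift_inj.
apply: fsum_le_mul_card => //.
- exact/finite_image/walk_ends_finite.
- by apply: finite_setD; apply: star_distk_finite.
- exact: fsumr_ge0.
- by move=> x /(star_distk_lift_nbhd eu) x_in /(_ x_in).
- move=> [[i x]|] [/= ux xNroot] _; last by case: xNroot.
  exact: nwalks_star2_le.
Qed.

Lemma nwalks_star_root4_le : W 4 None <= (N%:R * sigma + sigma * B) * (N%:R * sigma).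
Proof.
have root_card : \sum_(w \in [set w | distk star k None w]) (1 : R) = N%:R * sigma.
  by rewrite fsum_star_root_sphere // fsum_ord_cst.
rewrite nwalksS -[X in _ <= _ * X]root_card; apply: fsum_le_mul_card => //.
- exact: star_distk_finite.
- exact: star_distk_finite.
- by rewrite addr_ge0 ?mulr_ge0 //; apply: fsumr_ge0 => // u _; apply: fsumr_ge0.
- move=> w; rewrite star_root_sphere // => -[[i u] [_ /= eu] <-] _ /=.
  exact: nwalks_star3_le.
Qed.

End StarWalks.

Lemma sqrtrV_exp2n (R : rcfType) (P : R) n : 0 <= P -> (Num.sqrt P)^-1 ^+ n.*2 = (P ^+ n)^-1.
Proof. by move=> P_ge0; rewrite -mul2n exprM exprVn sqr_sqrtr // exprVn. Qed.

Section BernoulliLimit.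
Variable R : realType.

Lemma quartic_ge_off_pm1 (x d : R) : 0 < d -> d <= 1 ->
  d <= `|x - 1| -> d <= `|x + 1| -> (1 + `|x|) * d ^+ 2 <= (x ^+ 2 - 1) ^+ 2.
Proof.
move=> d_gt0 d_le1 dx1 dx2.
have sqr_ge y : d <= `|y| -> d ^+ 2 <= y ^+ 2.
  by move=> dy; rewrite -real_normK ?num_real // ler_pXn2r // nnegrE ?normr_ge0 // ltW.
have -> : (x ^+ 2 - 1) ^+ 2 = (x - 1) ^+ 2 * (x + 1) ^+ 2 by ring.
have d2_le1 : d ^+ 2 <= 1 by rewrite expr_le1 // ltW.
case: (lerP 0 x) => x0; [rewrite ger0_norm // | rewrite ltr0_norm //].
- rewrite mulrC ler_pM ?exprn_ge0 ?sqr_ge //; [exact: ltW | lra | nra].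
- rewrite mulrC [leRHS]mulrC ler_pM ?exprn_ge0 ?sqr_ge //; [exact: ltW | lra | nra].
Qed.

(* Subtracting the affine interpolant of f at -1 and 1 leaves a function vanishing
   at both points; off small neighbourhoods of them the bound (1 + |x|) d^2 <=
   (x^2 - 1)^2 absorbs its linear growth. *)
Lemma continuous_quartic_envelope (f : R -> R) (M eps : R) :
  continuous f -> (forall x, `|f x| <= M) -> 0 < eps ->
  exists2 K, 0 <= K & forall x,
    `|f x - ((f (-1) + f 1) / 2 + (f 1 - f (-1)) / 2 * x)| <= eps + K * (x ^+ 2 - 1) ^+ 2.
Proof.
move=> fc fM eps_gt0.
set c0 := (f (-1) + f 1) / 2; set c1 := (f 1 - f (-1)) / 2.
pose h x := f x - (c0 + c1 * x).
have hc : continuous h.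
  move=> x; apply: cvgB; first exact: fc.
  by apply: cvgD; [exact: cvg_cst | exact: mulrl_continuous].
have small_near a : h a = 0 -> exists2 d, 0 < d & forall x, `|a - x| < d -> `|h x| < eps.
  move=> ha; have /cvgrPdist_lt/(_ eps eps_gt0) := hc a.
  by rewrite ha => /nbhs_ballP[d d_gt0 hd]; exists d => // x /hd; rewrite sub0r normrN.
have [d1 d1_gt0 hd1] : exists2 d, 0 < d & forall x, `|1 - x| < d -> `|h x| < eps.
  by apply: small_near; rewrite /h /c0 /c1; field.
have [d2 d2_gt0 hd2] : exists2 d, 0 < d & forall x, `|-1 - x| < d -> `|h x| < eps.
  by apply: small_near; rewrite /h /c0 /c1; field.
pose d := Num.min 1 (Num.min d1 d2).
have d_gt0 : 0 < d by rewrite !lt_min d1_gt0 d2_gt0 ltr01.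
have [d_le1 d_le_d1 d_le_d2] : [/\ d <= 1, d <= d1 & d <= d2] by rewrite !ge_min !lexx !orbT.
have M_ge0 : 0 <= M by apply: le_trans (fM 0); exact: normr_ge0.
pose C := M + `|c0| + `|c1|.
have C_ge0 : 0 <= C by rewrite !addr_ge0 // normr_ge0.
exists (C / d ^+ 2) => [|x]; first by rewrite divr_ge0 // exprn_ge0 // ltW.
have K_ge0 : 0 <= C / d ^+ 2 * (x ^+ 2 - 1) ^+ 2.
  by rewrite mulr_ge0 ?sqr_ge0 // divr_ge0 // exprn_ge0 // ltW.
have [x1|x1] := ltrP `|1 - x| d; first by have := hd1 x (lt_le_trans x1 d_le_d1); lra.
have [x2|x2] := ltrP `|-1 - x| d; first by have := hd2 x (lt_le_trans x2 d_le_d2); lra.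
have h_lin : `|h x| <= C * (1 + `|x|).
  apply: (@le_trans _ _ (M + (`|c0| + `|c1| * `|x|))).
    apply: le_trans (ler_normB _ _) _; apply: lerD; first exact: fM.
    by apply: le_trans (ler_normD _ _) _; rewrite [`|c1 * x|]normrM.
  have : 0 <= (M + `|c0|) * `|x| by rewrite mulr_ge0 ?addr_ge0 ?normr_ge0.
  by rewrite /C mulrDr mulr1 mulrDl; have := normr_ge0 c1; lra.
have h_quart : C * (1 + `|x|) <= C / d ^+ 2 * (x ^+ 2 - 1) ^+ 2.
  rewrite mulrAC ler_pdivlMr ?exprn_gt0 // -mulrA ler_wpM2l //.
  apply: quartic_ge_off_pm1 => //; first by rewrite distrC.
  by rewrite -normrN opprD addrC.
by rewrite -/(h x); lra.
Qed.

Lemma bounded_continuous_integrable (mu : probability R R) (f : R -> R) (M : R) :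
  continuous f -> (forall x, `|f x| <= M) -> mu.-integrable setT (fun x => (f x)%:E).
Proof.
move=> fc fM; apply: measurable_bounded_integrable => //.
- by rewrite [X in (X < _)%E](probability_setT mu) ltry.
- exact: measurable_realfun.continuous_measurable_fun.
- by exists M; split=> [|y My x _]; [exact: num_real | exact: le_trans (fM x) (ltW My)].
Qed.

Lemma integral_quartic (mu : probability R R) (a b c d m1 m2 m4 : R) :
  (forall m, mu.-integrable setT (fun x => (x ^+ m)%:E)) ->
  (\int[mu]_x (x ^+ 1)%:E = m1%:E)%E -> (\int[mu]_x (x ^+ 2)%:E = m2%:E)%E ->
  (\int[mu]_x (x ^+ 4)%:E = m4%:E)%E ->
  mu.-integrable setT (fun x => (a + b * x + c * x ^+ 2 + d * x ^+ 4)%:E) /\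
  (\int[mu]_x (a + b * x + c * x ^+ 2 + d * x ^+ 4)%:E =
    (a + b * m1 + c * m2 + d * m4)%:E)%E.
Proof.
move=> pow_int m1E m2E m4E.
have m0E : (\int[mu]_x (x ^+ 0)%:E = 1%:E)%E.
  have -> : (fun x : R => (x ^+ 0)%:E) = cst 1%E by apply/funext => x; rewrite expr0.
  by rewrite integral_cst // mul1e; apply: probability_setT.
have -> : (fun x => (a + b * x + c * x ^+ 2 + d * x ^+ 4)%:E) = (fun x =>
    a%:E * (x ^+ 0)%:E + b%:E * (x ^+ 1)%:E + c%:E * (x ^+ 2)%:E + d%:E * (x ^+ 4)%:E)%E.
  by apply/funext => x; rewrite expr0 expr1 !EFinD !EFinM mule1.
have int_Z m r := integrableZl measurableT r (pow_int m).
have int_ab := integrableD measurableT (int_Z 0%N a) (int_Z 1%N b).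
have int_abc := integrableD measurableT int_ab (int_Z 2%N c).
split; first exact: (integrableD measurableT int_abc (int_Z 4%N d)).
rewrite (integralD measurableT int_abc (int_Z 4%N d)) (integralD measurableT int_ab (int_Z 2%N c)).
rewrite (integralD measurableT (int_Z 0%N a) (int_Z 1%N b)) !integralZl //.
by rewrite m0E m1E m2E m4E mule1 !EFinD !EFinM.
Qed.

Lemma integral_quartic_envelope (mu : probability R R) (f : R -> R) (c0 c1 eps K m4 : R) :
  (forall m, mu.-integrable setT (fun x => (x ^+ m)%:E)) ->
  (\int[mu]_x (x ^+ 1)%:E = 0%:E)%E -> (\int[mu]_x (x ^+ 2)%:E = 1%:E)%E ->
  (\int[mu]_x (x ^+ 4)%:E = m4%:E)%E ->
  mu.-integrable setT (fun x => (f x)%:E) ->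
  (forall x, `|f x - (c0 + c1 * x)| <= eps + K * (x ^+ 2 - 1) ^+ 2) ->
  `|c0 - fine (\int[mu]_x (f x)%:E)| <= eps + K * (m4 - 1).
Proof.
move=> pow_int m1E m2E m4E f_int f_env.
have quart (x : R) : (x ^+ 2 - 1) ^+ 2 = x ^+ 4 - 2 * x ^+ 2 + 1 by ring.
have [up_int upE] := integral_quartic (c0 + eps + K) c1 (- (2 * K)) K pow_int m1E m2E m4E.
have [lo_int loE] := integral_quartic (c0 - eps - K) c1 (2 * K) (- K) pow_int m1E m2E m4E.
have up : (\int[mu]_x (f x)%:E <= \int[mu]_x
    (c0 + eps + K + c1 * x + - (2 * K) * x ^+ 2 + K * x ^+ 4)%:E)%E.
  apply: le_integral => // x _; rewrite lee_fin.
  by have := f_env x; rewrite ler_norml quart => /andP[_]; lra.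
have lo : (\int[mu]_x (c0 - eps - K + c1 * x + 2 * K * x ^+ 2 + - K * x ^+ 4)%:E <=
    \int[mu]_x (f x)%:E)%E.
  apply: le_integral => // x _; rewrite lee_fin.
  by have := f_env x; rewrite ler_norml quart => /andP[+ _]; lra.
rewrite upE loE -(fineK (integrable_fin_num measurableT f_int)) !lee_fin in up lo.
by rewrite ler_norml; apply/andP; split; lra.
Qed.

Lemma cvg_integral_bernoulli (mu : nat -> probability R R) (m4 : nat -> R) (f : R -> R) :
  (\forall N \near \oo, [/\ forall m, (mu N).-integrable setT (fun x => (x ^+ m)%:E),
     (\int[mu N]_x (x ^+ 1)%:E = 0%:E)%E, (\int[mu N]_x (x ^+ 2)%:E = 1%:E)%E &
     (\int[mu N]_x (x ^+ 4)%:E = (m4 N)%:E)%E]) ->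
  (forall eps, 0 < eps -> \forall N \near \oo, m4 N <= 1 + eps) ->
  continuous f -> (exists M, forall x, `|f x| <= M) ->
  (fun N => \int[mu N]_x (f x)%:E)%E @ \oo --> ((f (-1) + f 1) / 2)%:E.
Proof.
move=> moments m4_le fc [M fM].
have f_int N := bounded_continuous_integrable (mu N) fc fM.
apply/fine_cvgP; split; first by apply: nearW => N; exact: integrable_fin_num (f_int N).
apply/cvgrPdist_le => eps eps_gt0.
have eps2_gt0 : 0 < eps / 2 by rewrite divr_gt0.
have [K K_ge0 f_env] := continuous_quartic_envelope fc fM eps2_gt0.
have K1_gt0 : 0 < K + 1 by rewrite ltr_wpDl.
have eps' : K * (eps / 2 / (K + 1)) <= eps / 2.
  by rewrite mulrCA ger_pMr // ler_pdivrMr // mul1r lerDl.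
apply: filterS2 moments (m4_le _ (divr_gt0 eps2_gt0 K1_gt0)) => N [pow_int m1E m2E m4E] m4N /=.
apply: le_trans (integral_quartic_envelope pow_int m1E m2E m4E (f_int N) f_env) _.
have : K * (m4 N - 1) <= K * (eps / 2 / (K + 1)) by apply: ler_wpM2l => //; lra.
lra.
Qed.

End BernoulliLimit.

Theorem theorem1p2 (R : realType) (V : choiceType) (adj : rel V) (e : V)
  (k : nat)
  (adj_sym : symmetric adj) (adj_irr : irreflexive adj)
  (loc_fin : forall x : V, finite_set [set y | adj x y])
  (conn : forall x y : V, exists p : seq V, path adj x p /\ last x p = y)
  (hk : (1 <= k)%N)
  (sigma : R)
  (sigma_def : sigma = \sum_(x \in [set x : V | distk adj k e x]) (1 : R))
  (sigma_ge1 : 1 <= sigma)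
  (mu : nat -> probability R R)
  (mu_mom : forall N m : nat, (0 < N)%N ->
     (mu N).-integrable setT (fun x : R => (x ^+ m)%:E) /\
     (\int[mu N]_x (x ^+ m)%:E =
       ((Num.sqrt (N%:R * sigma))^-1 ^+ m *
        nwalks R (distk (@star_adj V adj e N) k) None m None)%:E)%E) :
  forall f : R -> R, continuous f -> (exists M : R, forall x, `|f x| <= M) ->
    (fun N => \int[mu N]_x (f x)%:E)%E @ \oo -->
      ((f (-1) + f 1) / 2)%:E.
Proof.
move=> f fc f_bdd.
have sigma_gt0 : 0 < sigma by lra.
have NS_gt0 N : (0 < N)%N -> 0 < N%:R * sigma by move=> N_gt0; rewrite mulr_gt0 ?ltr0n.
set B := \sum_(u \in [set x | distk adj k e x]) \sum_(x \in walk_ends adj u k) (1 : R).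
have B_ge0 : 0 <= B by apply: fsumr_ge0 => u _; apply: fsumr_ge0.
pose m4 N := (Num.sqrt (N%:R * sigma))^-1 ^+ 4 *
  nwalks R (distk (@star_adj V adj e N) k) None 4 None.
have m4_le N : (0 < N)%N -> m4 N <= 1 + B / N%:R.
  move=> N_gt0; rewrite /m4 (sqrtrV_exp2n 2); last exact/ltW/NS_gt0.
  rewrite mulrC ler_pdivrMr ?exprn_gt0 ?NS_gt0 //.
  apply: le_trans (nwalks_star_root4_le R e N adj_sym adj_irr loc_fin hk) _.
  rewrite -sigma_def -/B le_eqVlt; apply/orP; left; apply/eqP; field.
  by rewrite pnatr_eq0 -lt0n.
apply: (cvg_integral_bernoulli (m4 := m4)) fc f_bdd.
- exists 1%N => // N /= N_gt0.
  have [_ m1E] := mu_mom N 1 N_gt0; have [_ m2E] := mu_mom N 2 N_gt0.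
  have [_ m4E] := mu_mom N 4 N_gt0.
  split=> [m|||]; last exact: m4E.
  + by case: (mu_mom N m N_gt0).
  + by rewrite m1E nwalks_star_root1 // mulr0.
  + rewrite m2E nwalks_star_root2 // -sigma_def (sqrtrV_exp2n 1); last exact/ltW/NS_gt0.
    by rewrite expr1 mulVf // gt_eqF ?NS_gt0.
- move=> eps eps_gt0.
  have Beps_ge0 : 0 <= B / eps by rewrite divr_ge0 // ltW.
  exists (maxn 1 (Num.Def.archi_bound (B / eps))) => // N /=; rewrite geq_max => /andP[N_gt0 N_ge].
  apply: le_trans (m4_le N N_gt0) _; rewrite lerD2l ler_pdivrMr ?ltr0n // mulrC -ler_pdivrMr //.
  by apply/ltW/(lt_le_trans (archi_boundP Beps_ge0)); rewrite ler_nat.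
Qed.
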